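(* In a combinatorial auction as described in the context, a Walrasian equilibrium $(x^*,p)$ is a price-match equilibrium if and only if $$p\bm Ax^*=w(\mathcal I\setminus i,c,\mathcal K(p))\qquad\text{for all } i\in\mathcal I.$$
   Context: Combinatorial auction: item types $j\in\mathcal J$ with supply $c_j\in\mathbb Z_{\ge1}$ (vector $c$); bidders $\mathcal I$; finite set of bids $\mathcal K$, bid $k$ made by bidder $i(k)$ with bundle $a^k\in\mathbb Z^J_{\ge0}$, $a^k\le c$, amount $b_k\ge0$; $\mathcal K_i$ = bids of bidder $i$; bids taken truthful. $\bm A$ = matrix with columns $a^k$, $\bm B$ with $\bm B_{i,k}=1$ iff $k\in\mathcal K_i$. Feasible allocation: $x\in\{0,1\}^K$, $\bm Ax\le c$, $\bm Bx\le\bm 1$. For a set of bidders $\mathcal C$, supply $c'$ and a bid collection with given amounts, $w(\mathcal C,c',\cdot)$ = maximum total bid amount over feasible allocations with supply $c'$ using only bids of bidders in $\mathcal C$. $x^*$ efficient allocation; $a^{i*},b_{i*}$ bundle and amount of $i$'s accepted bid ($\bm 0,0$ if none). $\mathcal K(p)$ denotes the same bids with amounts replaced by $b^p_k=p\,a^k$ if $p\,a^k\le b_k$ and $b^p_k=0$ otherwise. A Walrasian equilibrium (WE) is $(x^*,p)$, $p\ge0$, with $s_i=b_{i*}-p\,a^{i*}\ge0$, $p\,a^k+s_{i(k)}\ge b_k$ for all bids $k$, and $p_j=0$ for items in excess supply under $x^*$. A WE is a price-match equilibrium (PME) if for every bidder $i$ there is a feasible allocation $x^{-i}$ with $x^{-i}_k=0$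 for $k\in\mathcal K_i$, $p\,a^k\le b_k$ whenever $x^{-i}_k=1$, and $p\bm Ax^{-i}=p\bm Ax^*$. (Items may include artificial items, i.e. valid cuts added as rows of $\bm A$.) *)

From HB Require Import structures.
From mathcomp Require Import all_boot all_order all_algebra.
Set Implicit Arguments. Unset Strict Implicit. Unset Printing Implicit Defensive.
Import Order.TTheory GRing.Theory Num.Theory.
Local Open Scope ring_scope.

(* Combinatorial auction.  I = bidders, J = item types, K = bids.
   owner k = i(k), a k j = a^k_j (bundle), b k = b_k (amount),
   c j = supply.  Allocations are boolean vectors x : K -> bool. *)
Section Auction.
Variables (R : realFieldType) (I J K : finType).
Variables (owner : K -> I) (a : K -> J -> nat).

Definition feasible (c' : J -> nat) (x : K -> bool) : bool :=
  [forall j, (\sum_(k | x k) a k j <= c' j)%N] &&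
  [forall i, (\sum_(k | x k && (owner k == i)) 1 <= 1)%N].

Definition uses_only (C : {set I}) (x : K -> bool) : bool :=
  [forall k, x k ==> (owner k \in C)].

Definition value (amt : K -> R) (x : K -> bool) : R := \sum_(k | x k) amt k.

(* w(C, c', amt): maximum total amount over feasible allocations with supply
   c' using only bids of bidders in C (the empty allocation is always
   feasible, so the maximum over a nonempty set; amounts are >= 0 here). *)
Definition w (C : {set I}) (c' : J -> nat) (amt : K -> R) : R :=
  \big[Num.max/0]_(x : {ffun K -> bool} | feasible c' x && uses_only C x)
     value amt x.

Definition price (p : J -> R) (k : K) : R := \sum_j p j * (a k j)%:R.

(* amounts of K(p) *)
Definition bp (b : K -> R) (p : J -> R) (k : K) : R :=
  if price p k <= b k then price p k else 0.

Definition pAx (p : J -> R) (x : K -> bool) : R := \sum_(k | x k) price p k.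

Definition efficient (c : J -> nat) (b : K -> R) (x : K -> bool) : Prop :=
  feasible c x /\
  forall y : K -> bool, feasible c y -> value b y <= value b x.

Definition astar (x : K -> bool) (i : I) (j : J) : nat :=
  (\sum_(k | x k && (owner k == i)) a k j)%N.
Definition bstar (b : K -> R) (x : K -> bool) (i : I) : R :=
  \sum_(k | x k && (owner k == i)) b k.

Definition surplus (b : K -> R) (x : K -> bool) (p : J -> R) (i : I) : R :=
  bstar b x i - \sum_j p j * (astar x i j)%:R.

Definition walrasian (c : J -> nat) (b : K -> R) (x : K -> bool) (p : J -> R)
  : Prop :=
  [/\ forall j, 0 <= p j,
      forall i, 0 <= surplus b x p i,
      forall k, b k <= price p k + surplus b x p (owner k)
    & forall j, (\sum_(k | x k) a k j < c j)%N -> p j = 0].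

Definition price_match (c : J -> nat) (b : K -> R) (x : K -> bool)
  (p : J -> R) : Prop :=
  walrasian c b x p /\
  forall i : I, exists xi : K -> bool,
    [/\ feasible c xi,
        forall k, owner k = i -> xi k = false,
        forall k, xi k -> price p k <= b k
      & pAx p xi = pAx p x].

End Auction.

From HB Require Import structures.
From mathcomp Require Import all_boot all_order all_algebra.
Set Implicit Arguments. Unset Strict Implicit. Unset Printing Implicit Defensive.
Import Order.TTheory GRing.Theory Num.Theory.
Local Open Scope ring_scope.

(* Nonnegative prices that vanish on items in excess supply under x* give
   p A y <= p A x* for every feasible y, and under K(p) a bid is worth at
   most its price, so w(I \ i, c, K(p)) <= p A x*.  Equality for bidder i
   thus says that some feasible allocation avoiding i's bids has value
   p A x* under K(p).  Such an allocation, cut down to the bids priced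
   within their amounts, is the x^{-i} demanded by a price-match
   equilibrium; conversely that x^{-i} attains the bound. *)

Section Auction.
Variables (R : realFieldType) (I J K : finType).
Variables (owner : K -> I) (a : K -> J -> nat).

Lemma feasible_sub (c : J -> nat) (x y : K -> bool) :
  (forall k, y k -> x k) -> feasible owner a c x -> feasible owner a c y.
Proof.
move=> sub_yx /andP[/forallP supply_x /forallP unit_x].
have sum_mono := sub_le_big leqnn (fun m n => leq_addr n m) (x := 0%N).
apply/andP; split; apply/forallP.
  by move=> j; apply: leq_trans (supply_x j); apply: sum_mono => k /sub_yx.
move=> i; apply: leq_trans (unit_x i).
by apply: sum_mono => k /andP[/sub_yx ->].
Qed.

Lemma feasible0 (c : J -> nat) : feasible owner a c (fun _ => false).
Proof. by apply/andP; split; apply/forallP => ?; rewrite big_pred0. Qed.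

Lemma uses_only_setC1P (i : I) (x : K -> bool) :
  reflect (forall k, owner k = i -> x k = false)
          (uses_only owner (~: [set i]) x).
Proof.
apply: (iffP forallP) => [uses k ok | avoid k].
  by apply: contraTF (uses k) => ->; rewrite /= ok !inE eqxx.
by apply/implyP => xk; rewrite !inE; apply: contraTN xk => /eqP /avoid ->.
Qed.

Lemma le_w (C : {set I}) (c : J -> nat) (amt : K -> R) (x : K -> bool) :
  feasible owner a c x -> uses_only owner C x ->
  value amt x <= w owner a C c amt.
Proof.
move=> fx ux; have xE : finfun x =1 x by move=> k; rewrite ffunE.
have -> : value amt x = value amt (finfun x) by apply: eq_bigl => k; rewrite xE.
apply: le_bigmax_cond; apply/andP; split.
  by apply: feasible_sub fx => k; rewrite xE.
by apply/forallP => k; rewrite xE; apply: (forallP ux).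
Qed.

Lemma w_attained (C : {set I}) (c : J -> nat) (amt : K -> R) :
  exists2 y : {ffun K -> bool},
    feasible owner a c y && uses_only owner C y &
    w owner a C c amt = value amt y.
Proof.
rewrite /w; elim/big_ind: _ => [|u v [y1 ? ->] [y2 ? ->]|y ?].
- exists [ffun=> false]; last by rewrite /value big_pred0 // => k; rewrite ffunE.
  apply/andP; split; last by apply/forallP => k; rewrite ffunE.
  by apply: feasible_sub (feasible0 c) => k; rewrite ffunE.
- by case: leP => _; [exists y2 | exists y1].
- by exists y.
Qed.

Section Prices.
Variables (b : K -> R) (p : J -> R).

Lemma pAxE (x : K -> bool) :
  pAx a p x = \sum_j p j * (\sum_(k | x k) a k j)%:R.
Proof.
rewrite /pAx /price exchange_big /=; apply: eq_bigr => j _.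
by rewrite natr_sum mulr_sumr.
Qed.

Lemma value_bpE (x : K -> bool) :
  value (bp a b p) x = pAx a p (fun k => x k && (price a p k <= b k)).
Proof.
by rewrite /value /pAx big_mkcondr; apply: eq_bigr => k _; rewrite /bp.
Qed.

Lemma value_bp_affordable (x : K -> bool) :
  (forall k, x k -> price a p k <= b k) -> value (bp a b p) x = pAx a p x.
Proof.
move=> affordable; rewrite value_bpE; apply: eq_bigl => k.
by case xk: (x k) => //=; rewrite affordable.
Qed.

Hypothesis p_ge0 : forall j, 0 <= p j.

Lemma price_ge0 (k : K) : 0 <= price a p k.
Proof. by apply: sumr_ge0 => j _; apply: mulr_ge0. Qed.

Lemma bp_le_price (k : K) : bp a b p k <= price a p k.
Proof. by rewrite /bp; case: ifP => // _; apply: price_ge0. Qed.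

Variables (c : J -> nat) (xstar : K -> bool).
Hypothesis excess_price0 :
  forall j, (\sum_(k | xstar k) a k j < c j)%N -> p j = 0.

Lemma pAx_feasible_le (y : K -> bool) :
  feasible owner a c y -> pAx a p y <= pAx a p xstar.
Proof.
move=> /andP[/forallP supply_y _]; rewrite !pAxE; apply: ler_sum => j _.
have [/excess_price0 -> | full] := ltnP (\sum_(k | xstar k) a k j) (c j).
  by rewrite !mul0r.
by rewrite ler_wpM2l // ler_nat (leq_trans (supply_y j)).
Qed.

Lemma w_bp_le_pAx (C : {set I}) : w owner a C c (bp a b p) <= pAx a p xstar.
Proof.
apply: bigmax_le => [|y /andP[fy _]].
  by apply: sumr_ge0 => k _; apply: price_ge0.
apply: le_trans _ (pAx_feasible_le fy).
by apply: ler_sum => k _; apply: bp_le_price.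
Qed.

End Prices.
End Auction.

Arguments w_attained {R I J K} owner a C c amt.

Theorem proposition4 (R : realFieldType) (I J K : finType)
  (owner : K -> I) (a : K -> J -> nat) (c : J -> nat) (b : K -> R)
  (hc : forall j, (0 < c j)%N)
  (ha : forall k j, (a k j <= c j)%N)
  (hb : forall k, 0 <= b k)
  (xstar : K -> bool) (p : J -> R)
  (heff : efficient owner a c b xstar)
  (hwe : walrasian owner a c b xstar p) :
  price_match owner a c b xstar p <->
  (forall i : I,
     pAx a p xstar = w owner a (~: [set i]) c (bp a b p)).
Proof.
have [p_ge0 _ _ excess_price0] := hwe.
split=> [[_ match_i] i | w_eq].
  have [xi [fxi avoid_i affordable pAx_xi]] := match_i i.
  apply/eqP; rewrite eq_le w_bp_le_pAx // andbT -pAx_xi.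
  rewrite -(value_bp_affordable affordable).
  by apply: le_w fxi _; apply/uses_only_setC1P.
split=> // i; have [y /andP[fy /uses_only_setC1P avoid_i] wy] :=
  w_attained owner a (~: [set i]) c (bp a b p).
exists (fun k => y k && (price a p k <= b k)); split.
- by apply: feasible_sub fy => k /andP[].
- by move=> k /avoid_i ->.
- by move=> k /andP[].
by rewrite -value_bpE -wy -w_eq.
Qed.
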